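(* For spans $A\leftarrow M\to B$ and $B\leftarrow N\to C$, regarded as linear bicomodules $M\mathcal y\colon A\mathcal y\Leftarrow B\mathcal y$ and $N\mathcal y\colon B\mathcal y\Leftarrow C\mathcal y$, there is an isomorphism of $(A\mathcal y,C\mathcal y)$-bicomodules $$(M\mathcal y)^\vee\triangleleft_{B\mathcal y}(N\mathcal y)^\vee\;\cong\;\big(M\mathcal y\triangleleft_{B\mathcal y}N\mathcal y\big)^\vee.$$
   Context: $C\mathcal y$ is the discrete category (comonoid in $(\mathbf{Poly},\mathcal y,\triangleleft)$) on a set $C$; bicomodules between discrete categories with linear carrier are spans, and $\triangleleft_{B\mathcal y}$ (bicomodule composition, an equalizer in $\mathbf{Poly}$) corresponds on spans to composition by pullback. For a span $C\xleftarrow{f}M\xrightarrow{g}D$ with fibers $M_a$ over $a\in C$, the dual is the conjunctive bicomodule $(M\mathcal y)^\vee\cong\sum_{a\in C}\mathcal y^{M_a}$ (defined as $[M\mathcal y,\bot]$ for the local internal hom and the terminal span $\bot$), whose prafunctor $D\text{-}\mathbf{Set}\to C\text{-}\mathbf{Set}$ is $\Pi_f\Delta_g$. *)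

(* A bicomodule  A y <= C y  between discrete categories: a polynomial
   sum_{i : pos} y^{dir i} together with a map of positions to A
   (left coaction) and, for each position, a map of directions to C
   (right coaction).  Its prafunctor C-Set -> A-Set is
   X |-> (a |-> sum_{i, base i = a} prod_{d : dir i} X_{fib i d}). *)
Record Bicomod (A C : Type) := {
  pos  : Type;
  base : pos -> A;
  dir  : pos -> Type;
  fib  : forall i : pos, dir i -> C
}.
Arguments pos {A C} _.
Arguments base {A C} _ _.
Arguments dir {A C} _ _.
Arguments fib {A C} _ _ _.

(* Bicomodule composition  p <|_{B y} q  (the equalizer in Poly):
   a position is a position i of p together with, for every direction d
   of p at i, a position of q lying over fib p i d; directions are
   dependent pairs of directions. *)
Definition bicomod_comp {A B C : Type} (p : Bicomod A B) (q : Bicomod B C)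
  : Bicomod A C :=
  {| pos  := { i : pos p & forall d : dir p i, { j : pos q | base q j = fib p i d } };
     base := fun x => base p (projT1 x);
     dir  := fun x => { d : dir p (projT1 x) & dir q (proj1_sig (projT2 x d)) };
     fib  := fun x y => fib q (proj1_sig (projT2 x (projT1 y))) (projT2 y) |}.

(* Isomorphism of (A y, C y)-bicomodules: an isomorphism in Poly
   (bijection on positions, bijections on directions going backwards)
   compatible with both coactions. *)
Definition bicomod_iso {A C : Type} (p q : Bicomod A C) : Prop :=
  exists (phi : pos p -> pos q) (phi' : pos q -> pos p)
         (psi : forall i : pos p, dir q (phi i) -> dir p i)
         (psi' : forall i : pos p, dir p i -> dir q (phi i)),
    (forall i, phi' (phi i) = i) /\ (forall j, phi (phi' j) = j) /\
    (forall i e, psi' i (psi i e) = e) /\ (forall i d, psi i (psi' i d) = d) /\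
    (forall i, base q (phi i) = base p i) /\
    (forall i e, fib p i (psi i e) = fib q (phi i) e).

Record Span (A B : Type) := {
  apex : Type;
  sleft : apex -> A;
  sright : apex -> B
}.
Arguments apex {A B} _.
Arguments sleft {A B} _ _.
Arguments sright {A B} _ _.

Definition linear {A B : Type} (M : Span A B) : Bicomod A B :=
  {| pos := apex M; base := sleft M; dir := fun _ => unit;
     fib := fun m _ => sright M m |}.

(* Composition of spans by pullback; this is what  M y <|_{B y} N y
   corresponds to on linear bicomodules (see context). *)
Definition span_comp {A B C : Type} (M : Span A B) (N : Span B C) : Span A C :=
  {| apex := { mn : apex M * apex N | sright M (fst mn) = sleft N (snd mn) };
     sleft := fun x => sleft M (fst (proj1_sig x));
     sright := fun x => sright N (snd (proj1_sig x)) |}.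

(* The dual (conjunctive) bicomodule (M y)^vee = sum_{a : A} y^{M_a},
   with M_a the fiber of the left leg over a, directions mapped to B by
   the right leg. *)
Definition span_dual {A B : Type} (M : Span A B) : Bicomod A B :=
  {| pos := A; base := fun a => a;
     dir := fun a => { m : apex M | sleft M m = a };
     fib := fun a m => sright M (proj1_sig m) |}.

(* A position of (M y)^vee <| (N y)^vee over a : A is a choice, for every m in the
   fibre M_a, of a position of (N y)^vee lying over sright m; since the base map of
   a dual is the identity, that choice is forced, so positions are just A, as for
   the dual of the composite span.  Over a, the directions are pairs (m, n) with
   m in M_a and n in N_(sright m), i.e. exactly the fibre over a of the pullback. *)

From Stdlib Require Import FunctionalExtensionality ProofIrrelevance.

Lemma singleton_section_eq (X Y : Type) (g : X -> Y) (f : forall x, {y : Y | y = g x}) :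
  f = fun x => exist _ (g x) eq_refl.
Proof.
  apply functional_extensionality_dep; intros x.
  destruct (f x) as [y e]; subst y; reflexivity.
Qed.

Section DualComposite.

Variables (A B C : Type) (M : Span A B) (N : Span B C).

Local Notation P := (bicomod_comp (span_dual M) (span_dual N)).
Local Notation Q := (span_dual (span_comp M N)).

Definition dual_comp_pos (a : A) : pos P :=
  existT _ a (fun d => exist _ (sright M (proj1_sig d)) eq_refl).

Lemma dual_comp_pos_projT1 (x : pos P) : dual_comp_pos (projT1 x) = x.
Proof.
  destruct x as [a f]; unfold dual_comp_pos; simpl.
  f_equal; symmetry; exact (singleton_section_eq _ _ _ f).
Qed.

Definition comp_dir_of_pullback (x : pos P) (d : dir Q (projT1 x)) : dir P x :=
  let '(exist _ (exist _ (m, n) e_mn) e_m) := d in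
  existT _ (exist _ m e_m)
    (exist _ n (eq_trans (eq_sym e_mn)
                         (eq_sym (proj2_sig (projT2 x (exist _ m e_m)))))).

Definition pullback_of_comp_dir (x : pos P) (d : dir P x) : dir Q (projT1 x) :=
  let '(existT _ (exist _ m e_m) (exist _ n e_n)) := d in
  exist _ (exist _ (m, n)
             (eq_trans (eq_sym (proj2_sig (projT2 x (exist _ m e_m)))) (eq_sym e_n)))
        e_m.

Lemma pullback_of_comp_dirK (x : pos P) (d : dir Q (projT1 x)) :
  pullback_of_comp_dir x (comp_dir_of_pullback x d) = d.
Proof.
  destruct d as [[[m n] e_mn] e_m]; simpl.
  apply subset_eq_compat, subset_eq_compat; reflexivity.
Qed.

Lemma comp_dir_of_pullbackK (x : pos P) (d : dir P x) :
  comp_dir_of_pullback x (pullback_of_comp_dir x d) = d.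
Proof.
  destruct d as [[m e_m] [n e_n]]; simpl.
  f_equal; apply subset_eq_compat; reflexivity.
Qed.

Lemma fib_comp_dir_of_pullback (x : pos P) (d : dir Q (projT1 x)) :
  fib P x (comp_dir_of_pullback x d) = fib Q (projT1 x) d.
Proof. destruct d as [[[m n] e_mn] e_m]; reflexivity. Qed.

End DualComposite.

Theorem proposition2p55 (A B C : Type) (M : Span A B) (N : Span B C) :
  bicomod_iso (bicomod_comp (span_dual M) (span_dual N))
              (span_dual (span_comp M N)).
Proof.
  exists (@projT1 _ _), (dual_comp_pos _ _ _ M N), (comp_dir_of_pullback _ _ _ M N),
         (pullback_of_comp_dir _ _ _ M N).
  split; [|split; [|split; [|split; [|split]]]].
  - exact (dual_comp_pos_projT1 _ _ _ M N).
  - reflexivity.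
  - exact (pullback_of_comp_dirK _ _ _ M N).
  - exact (comp_dir_of_pullbackK _ _ _ M N).
  - reflexivity.
  - exact (fib_comp_dir_of_pullback _ _ _ M N).
Qed.
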